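(* For a restless bandit and a family $\mathcal F\subseteq 2^{N^{\{0,1\}}}$ as in the context, the following are equivalent: (1) $w^S_j>0$ for all $S\in\mathcal F$ and $j\in N^{\{0,1\}}$; (2) for all $S\in\mathcal F$, $b^S_j<b^{S\cup\{j\}}_j$ for every $j\in N^{\{0,1\}}\setminus S$, and $b^S_j>b^{S\setminus\{j\}}_j$ for every $j\in S$.
   Context: Restless bandit: finite state space $N=N^{\{0,1\}}\cup N^{\{1\}}$ (disjoint); actions $a\in\{0,1\}$; transition probabilities $p^a_{ij}$ with $p^1_{ij}=p^0_{ij}$ for $i\in N^{\{1\}}$; discount factor $\beta\in(0,1)$; activity weights $\theta^1_j>0$. For $S\subseteq N^{\{0,1\}}$ the $S$-active policy is active on $S\cup N^{\{1\}}$ and passive on $N^{\{0,1\}}\setminus S$; $b^S_i=E_i[\sum_{t\ge0}\theta^1_{X(t)}a(t)\beta^t]$ under it, from $X(0)=i$. Marginal workloads: $w^S_i=\theta^1_i1\{i\in N^{\{0,1\}}\}+\beta\sum_{j\in N}(p^1_{ij}-p^0_{ij})b^S_j$. $\mathcal F$ is a family of subsets of $N^{\{0,1\}}$. *)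

From HB Require Import structures.
From mathcomp Require Import all_boot all_order all_algebra.
From mathcomp Require Import all_classical all_reals all_analysis.
Set Implicit Arguments. Unset Strict Implicit. Unset Printing Implicit Defensive.
Import Order.TTheory GRing.Theory Num.Theory.
Local Open Scope ring_scope.

(* State space N = 'I_n; N01 : {set 'I_n} is N^{0,1}, its complement is N^{1}.
   p0 i j = p^0_{ij}, p1 i j = p^1_{ij}; th j = theta^1_j. *)

Definition stochastic (R : realType) (n : nat) (p : 'I_n -> 'I_n -> R) : Prop :=
  (forall i j, 0 <= p i j) /\ (forall i, \sum_(j < n) p i j = 1).

Definition active (n : nat) (N01 S : {set 'I_n}) (i : 'I_n) : bool :=
  (i \in S) || (i \notin N01).

Definition PS (R : realType) (n : nat) (N01 : {set 'I_n})
  (p0 p1 : 'I_n -> 'I_n -> R) (S : {set 'I_n}) : 'M[R]_n :=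
  \matrix_(i, j) (if active N01 S i then p1 i j else p0 i j).

(* b^S_i = E_i[ sum_t theta_{X(t)} a(t) beta^t ]
        = sum_{t>=0} beta^t sum_j P(X(t) = j | X(0) = i) theta_j a_S(j) *)
Definition bS (R : realType) (n : nat) (N01 : {set 'I_n})
  (p0 p1 : 'I_n -> 'I_n -> R) (beta : R) (th : 'I_n -> R)
  (S : {set 'I_n}) (i : 'I_n) : R :=
  limn (fun m => \sum_(t < m)
     beta ^+ t * \sum_(j < n) ((PS N01 p0 p1 S) ^+ t) i j
                   * (th j * (active N01 S j)%:R)).

Definition wS (R : realType) (n : nat) (N01 : {set 'I_n})
  (p0 p1 : 'I_n -> 'I_n -> R) (beta : R) (th : 'I_n -> R)
  (S : {set 'I_n}) (i : 'I_n) : R :=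
  th i * (i \in N01)%:R
  + beta * \sum_(j < n) (p1 i j - p0 i j) * bS N01 p0 p1 beta th S j.

From HB Require Import structures.
From mathcomp Require Import all_boot all_order all_algebra.
From mathcomp Require Import all_classical all_reals all_analysis.
From mathcomp Require Import ring.
Import Order.TTheory GRing.Theory Num.Theory.
Import numFieldNormedType.Exports.
Set Implicit Arguments. Unset Strict Implicit. Unset Printing Implicit Defensive.
Local Open Scope ring_scope.
Local Open Scope classical_set_scope.

(* The value b^S is the fixed point of the discounted Bellman equation
   b^S = r_S + beta P_S b^S.  If T is obtained from S by making j active, the
   difference d = b^T - b^S solves d = c e_j + beta Q d both for Q = P_T with
   c = w^S_j and for Q = P_S with c = w^T_j.  For a stochastic Q and beta < 1
   such an equation obeys a minimum principle (at a minimiser k of d,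
   d_k >= beta d_k), hence d_j > 0 exactly when c > 0.  Taking (S, T) to be
   (S, S + j) and (S - j, S) identifies the strict inequalities between the
   b's with the positivity of the marginal workloads. *)

Section StochasticMatrix.
Variables (R : realType) (n : nat) (Q : 'M[R]_n).
Hypothesis Q_stochastic : stochastic Q.

Lemma stochastic_avg_le (x : 'I_n -> R) c i :
  (forall k, x k <= c) -> \sum_k Q i k * x k <= c.
Proof.
case: Q_stochastic => Q_ge0 Q_row1 x_le.
rewrite -[leRHS]mul1r -(Q_row1 i) mulr_suml.
by apply: ler_sum => k _; rewrite ler_wpM2l.
Qed.

Lemma stochastic_avg_ge (x : 'I_n -> R) c i :
  (forall k, c <= x k) -> c <= \sum_k Q i k * x k.
Proof.
move=> le_x; rewrite -lerN2 -sumrN.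
under eq_bigr do rewrite -mulrN.
by apply: stochastic_avg_le => k; rewrite lerN2.
Qed.

Lemma stochastic_expmx_ge0 t i k : 0 <= (Q ^+ t) i k.
Proof.
case: Q_stochastic => Q_ge0 _; elim: t i k => [|t IHt] i k.
  by rewrite expr0 mxE ler0n.
rewrite exprS -mulmxE mxE; apply: sumr_ge0 => l _.
exact: mulr_ge0.
Qed.

Variable beta : R.
Hypotheses (beta_ge0 : 0 <= beta) (beta_lt1 : beta < 1).

Lemma discounted_fixpoint_ge0 (c d : 'I_n -> R) :
  (forall i, 0 <= c i) -> (forall i, d i = c i + beta * \sum_k Q i k * d k) ->
  forall i, 0 <= d i.
Proof.
move=> c_ge0 d_fix i.
have [k0 _ d_min] := @arg_minP _ R _ i xpredT d isT.
suff : 0 <= d k0 by move/le_trans; apply; apply: d_min.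
have : beta * d k0 <= d k0.
  rewrite [leRHS]d_fix -[leLHS]add0r.
  apply: lerD => //; apply: ler_wpM2l => //.
  by apply: stochastic_avg_ge => k; apply: d_min.
by rewrite -subr_ge0 -[X in X - _]mul1r -mulrBl pmulr_rge0 // subr_gt0.
Qed.

Lemma discounted_fixpoint_gt0 (d : 'I_n -> R) j w :
  (forall i, d i = (if i == j then w else 0) + beta * \sum_k Q i k * d k) ->
  (0 < d j) = (0 < w).
Proof.
move=> d_fix; apply/idP/idP => [d_gt0 | w_gt0].
  rewrite ltNge; apply: contraTN d_gt0 => w_le0.
  rewrite -leNgt -oppr_ge0.
  apply: (@discounted_fixpoint_ge0 (fun i => if i == j then - w else 0)
                                   (fun i => - d i)).
    by move=> i; case: ifP; rewrite ?oppr_ge0.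
  move=> i; rewrite d_fix opprD -mulrN -sumrN.
  congr (_ + _ * _); first by case: ifP; rewrite ?oppr0.
  by apply: eq_bigr => k _; rewrite mulrN.
have c_ge0 i : 0 <= if i == j then w else 0 by case: ifP => // _; apply: ltW.
have d_ge0 := discounted_fixpoint_ge0 c_ge0 d_fix.
rewrite d_fix eqxx ltr_pwDl // mulr_ge0 //.
exact: stochastic_avg_ge.
Qed.

Variable r : 'I_n -> R.
Hypothesis r_ge0 : forall i, 0 <= r i.

Definition discounted_partial_sum i m :=
  \sum_(t < m) beta ^+ t * \sum_(j < n) (Q ^+ t) i j * r j.

Local Notation u := discounted_partial_sum.

Lemma discounted_partial_sumS i m :
  u i m.+1 = r i + beta * \sum_k Q i k * u k m.
Proof.
rewrite /u big_ord_recl expr0 mul1r /= (bigD1 i) //= expr0 mxE eqxx mul1r.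
rewrite big1 ?addr0 => [|k /negbTE]; last by rewrite mxE eq_sym => ->; rewrite mul0r.
congr (_ + _); rewrite mulr_sumr.
under [RHS]eq_bigr do rewrite mulr_sumr mulr_sumr.
rewrite exchange_big /=; apply: eq_bigr => t _.
rewrite /bump leq0n add1n !exprS -mulmxE.
under eq_bigr do rewrite mxE mulr_suml.
rewrite exchange_big /= mulr_sumr; apply: eq_bigr => k _.
by rewrite !mulr_sumr; apply: eq_bigr => j _; ring.
Qed.

Lemma discounted_partial_sum_nondecreasing i : nondecreasing_seq (u i).
Proof.
apply/nondecreasing_seqP => m; rewrite /u big_ord_recr lerDl /=.
rewrite mulr_ge0 ?exprn_ge0 ?sumr_ge0 // => j _.
by rewrite mulr_ge0 ?stochastic_expmx_ge0.
Qed.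

Lemma discounted_partial_sum_le i m : u i m <= (\sum_k r k) / (1 - beta).
Proof.
have beta1_gt0 : 0 < 1 - beta by rewrite subr_gt0.
have r_le_sum k : r k <= \sum_l r l.
  by rewrite (bigD1 k) //= lerDl sumr_ge0.
elim: m i => [|m IHm] i; first by rewrite /u big_ord0 divr_ge0 ?sumr_ge0 ?ltW.
rewrite discounted_partial_sumS.
have -> : (\sum_k r k) / (1 - beta) = \sum_k r k + beta * ((\sum_k r k) / (1 - beta)).
  by field; rewrite lt0r_neq0.
by rewrite lerD // ler_wpM2l // stochastic_avg_le.
Qed.

Lemma discounted_partial_sum_cvg i : u i @ \oo --> limn (u i).
Proof.
apply/cvg_ex; exists (sup (range (u i))).
apply: nondecreasing_cvgn; first exact: discounted_partial_sum_nondecreasing.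
by exists ((\sum_k r k) / (1 - beta)) => _ [m _ <-]; apply: discounted_partial_sum_le.
Qed.

Lemma discounted_value_fixpoint i :
  limn (u i) = r i + beta * \sum_k Q i k * limn (u k).
Proof.
have u_cvgS : r i + beta * \sum_k Q i k * u k m @[m --> \oo] --> limn (u i).
  under eq_cvg do rewrite -discounted_partial_sumS.
  by have := @discounted_partial_sum_cvg i; rewrite -cvg_shiftS.
apply: (cvg_unique _ u_cvgS); first exact: Rhausdorff.
apply: cvgD; first exact: cvg_cst.
apply: cvgMl_tmp; apply: cvg_big => [|k _]; first exact: add_continuous.
by apply: cvgMl_tmp; apply: discounted_partial_sum_cvg.
Qed.
End StochasticMatrix.

Section RestlessBandit.
Variables (R : realType) (n : nat) (N01 : {set 'I_n}).
Variables (p0 p1 : 'I_n -> 'I_n -> R) (beta : R) (th : 'I_n -> R).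
Hypotheses (hp0 : stochastic p0) (hp1 : stochastic p1).
Hypotheses (beta_gt0 : 0 < beta) (beta_lt1 : beta < 1) (th_gt0 : forall j, 0 < th j).

Local Notation P := (PS N01 p0 p1).
Local Notation b := (bS N01 p0 p1 beta th).
Local Notation w := (wS N01 p0 p1 beta th).

Definition reward S i := th i * (active N01 S i)%:R.

Lemma PS_stochastic S : stochastic (P S).
Proof.
case: hp0 hp1 => [p0_ge0 p0_row1] [p1_ge0 p1_row1].
split=> [i k | i]; first by rewrite mxE; case: ifP.
by under eq_bigr do rewrite mxE; case: (active N01 S i).
Qed.

Lemma bS_fixpoint S i : b S i = reward S i + beta * \sum_k P S i k * b S k.
Proof.
have reward_ge0 k : 0 <= reward S k by rewrite /reward mulr_ge0 ?ler0n ?ltW.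
exact: (discounted_value_fixpoint (PS_stochastic S) (ltW beta_gt0) beta_lt1
          reward_ge0).
Qed.

Section Switch.
Variables (S T : {set 'I_n}) (j : 'I_n).
Hypotheses (S_passive : ~~ active N01 S j) (T_active : active N01 T j).
Hypothesis active_off : forall i, i != j -> active N01 S i = active N01 T i.

Lemma switch_row_off i k : i != j -> P S i k = P T i k.
Proof. by move=> ij; rewrite !mxE active_off. Qed.

Lemma switch_diff_off i : i != j ->
  b T i - b S i = beta * \sum_k P T i k * (b T k - b S k).
Proof.
move=> ij; rewrite !bS_fixpoint /reward active_off // opprD addrACA subrr add0r.
rewrite -mulrBr -sumrB; congr (_ * _); apply: eq_bigr => k _.
by rewrite switch_row_off // mulrBr.
Qed.

Lemma switch_diff_at :
  b T j - b S j = th j + beta * \sum_k (p1 j k * b T k - p0 j k * b S k).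
Proof.
rewrite !bS_fixpoint /reward T_active (negbTE S_passive) mulr1 mulr0 add0r.
rewrite -addrA -mulrBr -sumrB; congr (_ + _ * _); apply: eq_bigr => k _.
by rewrite !mxE T_active (negbTE S_passive).
Qed.

Lemma switch_in_N01 : j \in N01.
Proof. by move: S_passive; rewrite /active negb_or negbK => /andP[]. Qed.

Lemma lt_switch_passive : (b S j < b T j) = (0 < w S j).
Proof.
rewrite -subr_gt0.
apply: (discounted_fixpoint_gt0 (PS_stochastic T) (ltW beta_gt0) beta_lt1
          (d := fun i => b T i - b S i)).
move=> i; case: eqP => [-> | /eqP ij]; last by rewrite add0r switch_diff_off.
rewrite switch_diff_at /wS switch_in_N01 mulr1 -addrA -mulrDr -big_split /=.
by congr (_ + _ * _); apply: eq_bigr => k _; rewrite mxE T_active; ring.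
Qed.

Lemma lt_switch_active : (b S j < b T j) = (0 < w T j).
Proof.
rewrite -subr_gt0.
apply: (discounted_fixpoint_gt0 (PS_stochastic S) (ltW beta_gt0) beta_lt1
          (d := fun i => b T i - b S i)).
move=> i; case: eqP => [-> | /eqP ij].
  rewrite switch_diff_at /wS switch_in_N01 mulr1 -addrA -mulrDr -big_split /=.
  by congr (_ + _ * _); apply: eq_bigr => k _; rewrite mxE (negbTE S_passive); ring.
rewrite add0r switch_diff_off //; congr (_ * _); apply: eq_bigr => k _.
by rewrite switch_row_off.
Qed.

End Switch.

Lemma lt_bS_setU1 (S : {set 'I_n}) j :
  j \in N01 :\: S -> (b S j < b (j |: S) j) = (0 < w S j).
Proof.
case/setDP => jN jS; apply: lt_switch_passive.
- by rewrite /active (negbTE jS) jN.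
- by rewrite /active setU11.
- by move=> i ij; rewrite /active in_setU1 (negbTE ij).
Qed.

Lemma lt_bS_setD1 (S : {set 'I_n}) j :
  S \subset N01 -> j \in S -> (b (S :\ j) j < b S j) = (0 < w S j).
Proof.
move=> SN jS; apply: lt_switch_active.
- by rewrite /active setD11 (fintype.subsetP SN).
- by rewrite /active jS.
- by move=> i ij; rewrite /active in_setD1 ij.
Qed.

End RestlessBandit.

Theorem proposition5 (R : realType) (n : nat) (N01 : {set 'I_n})
  (p0 p1 : 'I_n -> 'I_n -> R) (beta : R) (th : 'I_n -> R)
  (F : {set {set 'I_n}})
  (hp0 : stochastic p0) (hp1 : stochastic p1)
  (hN1 : forall i j, i \notin N01 -> p1 i j = p0 i j)
  (hbeta : 0 < beta < 1)
  (hth : forall j, 0 < th j)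
  (hF : forall S, S \in F -> S \subset N01) :
  (forall S, S \in F -> forall j, j \in N01 -> 0 < wS N01 p0 p1 beta th S j)
  <->
  (forall S, S \in F ->
     (forall j, j \in N01 :\: S ->
        bS N01 p0 p1 beta th S j < bS N01 p0 p1 beta th (j |: S) j)
     /\ (forall j, j \in S ->
        bS N01 p0 p1 beta th (S :\ j) j < bS N01 p0 p1 beta th S j)).
Proof.
have [beta_gt0 beta_lt1] := andP hbeta.
have up := lt_bS_setU1 hp0 hp1 beta_gt0 beta_lt1 hth.
have down := lt_bS_setD1 hp0 hp1 beta_gt0 beta_lt1 hth.
split=> [w_gt0 S SF | b_lt S SF j jN].
  split=> [j jNS | j jS]; first by rewrite up // w_gt0 //; case/setDP: jNS.
  by rewrite down ?hF // w_gt0 // (fintype.subsetP (hF S SF)).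
have [b_up b_down] := b_lt S SF.
have [jS | jNS] := boolP (j \in S); first by rewrite -down ?hF ?b_down.
by rewrite -up ?b_up // inE jNS jN.
Qed.
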